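(* Let $s,t\ge1$ and let $f=(f_1,\dots,f_{t+1}):\Delta^s\to\Delta^t$. If some finite automaton over the alphabet $\{1,\dots,s+1\}$ simulates $f$, then each $f_j$ is a rational function with rational coefficients on $\Delta^s$: there exist $g_j,h_j\in\mathbb Z[x_1,\dots,x_{s+1}]$ with $h_j(p)\neq0$ and $f_j(p)=g_j(p)/h_j(p)$ for all $p\in\Delta^s$.
   Context: $\Delta^s=\{p\in(0,1)^{s+1}:\sum_{i=1}^{s+1}p_i=1\}$ is the open simplex of probability vectors. For a word $w$ over the alphabet $\{1,\dots,s+1\}$ let $n_i(w)$ be the number of occurrences of $i$, and for $p\in\Delta^s$ put $\mathbf P_p[w]=\prod_i p_i^{n_i(w)}$, $\mathbf P_p[L]=\sum_{w\in L}\mathbf P_p[w]$ (the law of i.i.d. letters with distribution $p$). A simulation of $f=(f_1,\dots,f_{t+1}):\Delta^s\to\Delta^t$ is a tuple of pairwise disjoint languages $L_1,\dots,L_{t+1}$ over $\{1,\dots,s+1\}$ whose union is prefix-free (no word is a proper prefix of another) such that $\mathbf P_p[L_j]=f_j(p)$ for all $p\in\Delta^s$ and all $j$. A finite automaton over this alphabet consists of a finite state set $S$, a start state $s_0$, a transition function $\delta:S\times\{1,\dots,s+1\}\to S$ (extended to words), and pairwise disjoint absorbing final-state sets $S_1,\dots,S_{t+1}$; $L_j$ is the set of words $w$ with $\delta(s_0,w)\in S_j$ and no proper prefix of $w$ leading into a final state. The automaton simulates $f$ if $(L_1,\dots,L_{t+1})$ is a simulation of $f$. *)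

From HB Require Import structures.
From mathcomp Require Import all_boot all_order all_algebra.
From mathcomp Require Import all_classical all_reals.
From mathcomp Require Import esum.
From mathcomp Require mpoly.

Set Implicit Arguments.
Unset Strict Implicit.
Unset Printing Implicit Defensive.

Import Order.TTheory GRing.Theory Num.Theory.
Local Open Scope classical_set_scope.
Local Open Scope ring_scope.

Definition in_simplex (R : realType) (s : nat) (p : 'I_s.+1 -> R) : Prop :=
  (forall i, 0 < p i < 1) /\ \sum_(i < s.+1) p i = 1.

(* Words over the alphabet {1,...,s+1} (encoded as 'I_(s+1)) and languages. *)
Definition word (s : nat) := seq 'I_s.+1.
Definition language (s : nat) := set (word s).

Definition Pword (R : realType) (s : nat) (p : 'I_s.+1 -> R) (w : word s) : R :=
  \prod_(i < s.+1) p i ^+ count_mem i w.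

Definition Plang (R : realType) (s : nat) (p : 'I_s.+1 -> R) (L : language s) : \bar R :=
  \esum_(w in L) (Pword p w)%:E.

Definition prefix_free_union (s t : nat) (L : 'I_t.+1 -> language s) : Prop :=
  forall j k (u v : word s), L j u -> L k v -> prefix u v -> u = v.

Definition simulation (R : realType) (s t : nat)
    (f : ('I_s.+1 -> R) -> 'I_t.+1 -> R) (L : 'I_t.+1 -> language s) : Prop :=
  [/\ (forall j k, j <> k -> L j `&` L k = set0),
      prefix_free_union L &
      forall p, in_simplex p -> forall j, Plang p (L j) = (f p j)%:E].

Record automaton (s t : nat) := Automaton {
  state : finType;
  start : state;
  delta : state -> 'I_s.+1 -> state;
  final : 'I_t.+1 -> {set state};
  final_disjoint : forall j k, j <> k -> final j :&: final k = finset.set0;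
  final_absorbing : forall j q a, q \in final j -> delta q a \in final j
}.

Definition delta_word (s t : nat) (A : automaton s t) (q : state A) (w : word s) : state A :=
  foldl (@delta s t A) q w.

Definition is_final (s t : nat) (A : automaton s t) (q : state A) : bool :=
  [exists j, q \in final A j].

Definition aut_lang (s t : nat) (A : automaton s t) (j : 'I_t.+1) : language s :=
  [set w | (delta_word (start A) w \in final A j) /\
           (forall k, (k < size w)%N -> ~~ is_final (delta_word (start A) (take k w)))].

Definition aut_simulates (R : realType) (s t : nat) (A : automaton s t)
    (f : ('I_s.+1 -> R) -> 'I_t.+1 -> R) : Prop :=
  simulation f (aut_lang A).

Definition zeval (R : realType) (n : nat) (g : mpoly.mpoly n int) (p : 'I_n -> R) : R :=
  mpoly.mmap (fun z : int => z%:~R) p g.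

From HB Require Import structures.
From mathcomp Require Import all_boot all_order all_algebra.
From mathcomp Require Import ring.
From mathcomp Require Import mpoly.
From mathcomp Require Import all_classical all_reals.
From mathcomp Require Import ereal esum.
Import Order.TTheory GRing.Theory Num.Theory.
Local Open Scope classical_set_scope.
Local Open Scope ring_scope.

Set Implicit Arguments.
Unset Strict Implicit.
Unset Printing Implicit Defensive.

(* Let x_q(p) be the probability, starting from state q, of entering S_j before
   any other final state.  These numbers solve a linear system N(p) x = b whose
   coefficients are integer polynomials in p: x_q is the indicator of S_j at a
   final state, 0 at a state from which S_j cannot be reached, and
   sum_a p_a x_(delta q a) elsewhere.  N(p) is invertible on the open simplex by
   a maximum principle: a nonzero solution of the homogeneous system takes its
   largest modulus at an inner state, where it is a convex combination with
   positive weights of its successors, so that value propagates to the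
   boundary, where it vanishes.  Cramer's rule then gives
   f_j(p) = x_(s_0)(p) = (adj N b)_(s_0) / det N. *)

Lemma esumZl (R : realType) (T : choiceType) (S : set T) (a : T -> \bar R) (r : R) :
  0 < r -> (forall x, 0 <= a x)%E ->
  (\esum_(x in S) (r%:E * a x) = r%:E * \esum_(x in S) a x)%E.
Proof.
move=> r_gt0 a_ge0; rewrite /esum -ereal_sup_pZl//; congr ereal_sup.
by rewrite image_comp; apply: eq_imagel => F _ /=; rewrite ge0_mule_fsumr.
Qed.

Lemma esum_setT_fin (R : realType) (T : finType) (a : T -> \bar R) :
  (forall x, 0 <= a x)%E -> (\esum_(x in [set: T]) a x = \sum_(x : T) a x)%E.
Proof.
move=> a_ge0; rewrite esum_fset; last by move=> *; apply: a_ge0.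
  rewrite (fsbigE (enum T)) ?enum_uniq//.
  - by rewrite big_enum_cond /=; apply: eq_bigl => x; rewrite in_setT.
  - by move=> x _; rewrite mem_enum.
exact: finite_finset.
Qed.

Section MaximumPrinciple.
Variables (R : realDomainType) (I : finType) (p : I -> R).
Hypotheses (p_gt0 : forall i, 0 < p i) (p_sum1 : \sum_i p i = 1).

(* The weighted sum of the nonnegative terms [c^2 - c z_i] is zero, so each one is. *)
Lemma convex_comb_norm_le_eq (z : I -> R) (c : R) :
  (forall i, `|z i| <= `|c|) -> c = \sum_i p i * z i -> forall i, z i = c.
Proof.
move=> z_le c_comb i; have [c0|c_neq0] := eqVneq c 0.
  by have := z_le i; rewrite c0 normr0 normr_le0 => /eqP.
have sum0 : \sum_k p k * (c * c - c * z k) = 0.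
  rewrite (eq_bigr (fun k => c * c * p k - c * (p k * z k))) => [|k _]; last by ring.
  by rewrite sumrB -!mulr_sumr p_sum1 -c_comb; ring.
have term_ge0 k : 0 <= p k * (c * c - c * z k).
  apply: mulr_ge0; first exact: ltW.
  rewrite subr_ge0 (le_trans (ler_norm _)) //.
  rewrite normrM (le_trans (ler_wpM2l (normr_ge0 c) (z_le k))) //.
  by rewrite -normrM ger0_norm // -expr2 sqr_ge0.
have := @psumr_eq0P _ _ xpredT _ (fun k _ => term_ge0 k) sum0 i isT.
by move/eqP; rewrite mulf_eq0 gt_eqF //= subr_eq0 => /eqP /(mulfI c_neq0).
Qed.

Variables (S : finType) (step : S -> I -> S) (B : pred S) (y : S -> R).
Hypothesis boundary_reachable : forall q, exists w : seq I, B (foldl step q w).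
Hypothesis y_boundary : forall q, B q -> y q = 0.
Hypothesis y_harmonic : forall q, ~~ B q -> y q = \sum_i p i * y (step q i).

Lemma harmonic_eq0 q : y q = 0.
Proof.
pose m := [arg max_(r > q) `|y r|]%O.
have y_le_m r : `|y r| <= `|y m| by rewrite /m; case: arg_maxP => // ? _; apply.
suff ym0 : y m = 0 by have := y_le_m q; rewrite ym0 normr0 normr_le0 => /eqP.
apply/eqP; apply: contraT => ym_neq0.
have ym_propagates w r : y r = y m -> y (foldl step r w) = y m.
  elim: w r => [//|a w IHw] r yr /=; apply: IHw.
  have r_inner : ~~ B r by apply: contraNN ym_neq0 => /y_boundary; rewrite -yr => ->.
  rewrite -yr; apply: (convex_comb_norm_le_eq (z := fun b => y (step r b))).
    by move=> b; rewrite yr y_le_m.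
  exact: y_harmonic.
have [w Bw] := boundary_reachable m.
by move: ym_neq0; rewrite -(ym_propagates w m erefl) y_boundary ?eqxx.
Qed.

End MaximumPrinciple.

Lemma cramer_rmorph (A B : comNzRingType) (phi : {rmorphism A -> B}) n
    (M : 'M[A]_n) (b : 'cV[A]_n) (x : 'cV[B]_n) i :
  map_mx phi M *m x = map_mx phi b -> phi ((\adj M *m b) i 0) = phi (\det M) * x i 0.
Proof.
move=> Mx_b; have -> : phi ((\adj M *m b) i 0) = map_mx phi (\adj M *m b) i 0.
  by rewrite [RHS]mxE.
rewrite map_mxM map_mx_adj -Mx_b.
by rewrite mulmxA mul_adj_mx mul_scalar_mx mxE det_map_mx.
Qed.

Lemma Pword_nil (R : realType) s (p : 'I_s.+1 -> R) : Pword p [::] = 1.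
Proof. by rewrite /Pword big1. Qed.

Lemma Pword_cons (R : realType) s (p : 'I_s.+1 -> R) a (w : word s) :
  Pword p (a :: w) = p a * Pword p w.
Proof.
rewrite /Pword (eq_bigr (fun i => p i ^+ (a == i) * p i ^+ count_mem i w)) => [|i _];
  last by rewrite /= exprD.
rewrite big_split /= (bigD1 a) //= eqxx expr1 big1 ?mulr1 // => i /negbTE.
by rewrite eq_sym => ->.
Qed.

Lemma Pword_gt0 (R : realType) s (p : 'I_s.+1 -> R) (w : word s) :
  (forall i, 0 < p i) -> 0 < Pword p w.
Proof. by move=> p_gt0; apply: prodr_gt0 => i _; apply: exprn_gt0. Qed.

Definition state_col (T : finType) (V : Type) (y : T -> V) : 'cV[V]_#|T| :=
  \col_i y (enum_val i).

Lemma zevalX (R : realType) n (p : 'I_n -> R) i : zeval 'X_i p = p i.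
Proof. by rewrite /zeval mmapX mmap1U. Qed.

Section Automaton.
Variables (s t : nat) (A : automaton s t) (j : 'I_t.+1).

Definition lang_from (q : state A) : language s :=
  [set w | (delta_word q w \in final A j) /\
           (forall k, (k < size w)%N -> ~~ is_final (delta_word q (take k w)))].

Definition dead (q : state A) : Prop := forall w, delta_word q w \notin final A j.

Definition reachable (q : state A) : Prop :=
  exists2 u : word s, delta_word (start A) u = q &
    forall k, (k < size u)%N -> ~~ is_final (delta_word (start A) (take k u)).

(* Unreachable states are put on the boundary: along a path from the start
   state, [absorb_prob_path_le] bounds every absorption probability left in the
   system by the finite one at the start state, so no Kraft inequality is needed. *)
Definition boundary (q : state A) : bool :=
  [|| is_final q, `[< dead q >] | ~~ `[< reachable q >]].

Definition boundary_value (q : state A) : bool := `[< reachable q >] && (q \in final A j).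

Definition transition_matrix : 'M[{mpoly int[s.+1]}]_#|state A| :=
  \matrix_(i, k) (if boundary (enum_val i) then 0
                  else \sum_(a | delta (enum_val i) a == enum_val k) 'X_a).

Definition system_matrix : 'M[{mpoly int[s.+1]}]_#|state A| := 1%:M - transition_matrix.

Definition boundary_vector : 'cV[{mpoly int[s.+1]}]_#|state A| :=
  state_col (fun q => (boundary_value q)%:R).

Lemma final_is_final (q : state A) : q \in final A j -> is_final q.
Proof. by move=> qj; apply/existsP; exists j. Qed.

Lemma lang_from_cons (q : state A) : ~~ is_final q ->
  lang_from q =
  (fun aw => aw.1 :: aw.2) @` ([set: 'I_s.+1] `*`` (fun a => lang_from (delta q a))).
Proof.
move=> q_nfinal; apply/seteqP; split.
- move=> [|a w] [w_final w_prefix]; first by rewrite (final_is_final w_final) in q_nfinal.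
  by exists (a, w) => //; split => //; split => // k; apply: (w_prefix k.+1).
- move=> _ [[a w] [_ [w_final w_prefix]] <-]; split => //.
  by case=> [|k] //= /w_prefix.
Qed.

Lemma reachable_step (q : state A) a : reachable q -> ~~ is_final q -> reachable (delta q a).
Proof.
move=> [u uq u_prefix] q_nfinal; exists (rcons u a).
  by rewrite /delta_word foldl_rcons -/(delta_word _ _) uq.
move=> k; rewrite size_rcons ltnS leq_eqVlt -cats1 => /orP[/eqP ->|k_lt].
  by rewrite take_size_cat // uq.
by rewrite takel_cat ?u_prefix // ltnW.
Qed.

Lemma boundary_reachable (q : state A) : exists w, boundary (delta_word q w).
Proof.
have [q_dead|] := asboolP (dead q); first by exists [::]; rewrite /boundary asboolT ?orbT.
by move=> /existsNP [w /negP /negbNE w_final]; exists w; rewrite /boundary final_is_final.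
Qed.

Section Probabilities.
Variables (R : realType) (p : 'I_s.+1 -> R).
Hypothesis p_gt0 : forall a, 0 < p a.

Local Notation evalp := (fun g => zeval g p).

Definition absorb_prob (q : state A) : \bar R := Plang p (lang_from q).

Definition absorb_prob_real (q : state A) : R :=
  if `[< reachable q >] then fine (absorb_prob q) else 0.

Lemma absorb_prob_ge0 q : (0 <= absorb_prob q)%E.
Proof. by apply: esum_ge0 => w _; rewrite lee_fin ltW // Pword_gt0. Qed.

Lemma absorb_prob_step q : ~~ is_final q ->
  absorb_prob q = (\sum_a (p a)%:E * absorb_prob (delta q a))%E.
Proof.
move=> q_nfinal; have Pword_ge0 w : (0 <= (Pword p w)%:E)%E.
  by rewrite lee_fin ltW // Pword_gt0.
rewrite /absorb_prob /Plang lang_from_cons // esum_image => [|[a w] [b v] _ _ /= [-> ->] //].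
rewrite -(@esum_esum _ _ _ _ (fun a => lang_from (delta q a))
  (fun a w => (Pword p (a :: w))%:E)) => [|? ? _ _]; last exact: Pword_ge0.
rewrite esum_setT_fin => [|a]; last exact: esum_ge0.
apply: eq_bigr => a _; under eq_esum do rewrite Pword_cons EFinM.
by rewrite esumZl.
Qed.

Lemma absorb_prob_final q : is_final q -> absorb_prob q = ((q \in final A j)%:R)%:E.
Proof.
move=> q_final; have lang_nil w : lang_from q w -> w = [::].
  by case: w => [//|a w] [_ /(_ 0%N isT)]; rewrite /= q_final.
rewrite /absorb_prob /Plang; have [qj|qNj] := boolP (q \in final A j).
  rewrite (_ : lang_from q = [set [::]]) ?esum_set1 ?Pword_nil ?lee_fin ?ler01 //.
  by apply/seteqP; split => [w /lang_nil ->|w /= ->].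
rewrite (_ : lang_from q = set0) ?esum_set0 //.
apply/seteqP; split => // w w_lang; move: (w_lang) => [+ _].
by rewrite (lang_nil _ w_lang) (negbTE qNj).
Qed.

Lemma absorb_prob_dead q : dead q -> absorb_prob q = 0%E.
Proof.
move=> q_dead; rewrite /absorb_prob /Plang (_ : lang_from q = set0) ?esum_set0 //.
by apply/seteqP; split => // w [w_final _]; move: (q_dead w); rewrite w_final.
Qed.

Lemma absorb_prob_path_le (u : word s) q :
  (forall k, (k < size u)%N -> ~~ is_final (delta_word q (take k u))) ->
  ((Pword p u)%:E * absorb_prob (delta_word q u) <= absorb_prob q)%E.
Proof.
elim: u q => [|a u IHu] q u_prefix; first by rewrite Pword_nil mul1e.
have q_nfinal : ~~ is_final q by apply: (u_prefix 0%N).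
rewrite (absorb_prob_step q_nfinal) (bigD1 a) //= Pword_cons EFinM -muleA.
apply: le_trans (leeDl _ (sume_ge0 _ _)) => [|b _]; last first.
  by rewrite mule_ge0 ?absorb_prob_ge0 // lee_fin ltW.
apply: lee_wpmul2l; first by rewrite lee_fin ltW.
by apply: IHu => k k_lt; apply: (u_prefix k.+1).
Qed.

Lemma absorb_prob_fin_num q : absorb_prob (start A) \is a fin_num -> reachable q ->
  absorb_prob q \is a fin_num.
Proof.
move=> start_fin [u <- u_prefix]; have := absorb_prob_path_le u_prefix.
have := absorb_prob_ge0 (delta_word (start A) u); move: start_fin.
case: (absorb_prob (start A)) (absorb_prob (delta_word _ u)) => [x||] // [y||] //= _ _.
by rewrite gt0_muley ?lte_fin ?Pword_gt0.
Qed.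

Lemma absorb_prob_real_boundary q : boundary q -> absorb_prob_real q = (boundary_value q)%:R.
Proof.
rewrite /boundary /absorb_prob_real /boundary_value.
case: (asboolP (reachable q)) => //= q_reach; rewrite orbF => /orP[q_final|/asboolP q_dead].
  by rewrite absorb_prob_final.
by rewrite absorb_prob_dead // (negbTE (q_dead [::])).
Qed.

Lemma absorb_prob_real_step q : absorb_prob (start A) \is a fin_num -> ~~ boundary q ->
  absorb_prob_real q = \sum_a p a * absorb_prob_real (delta q a).
Proof.
move=> start_fin; rewrite /boundary !negb_or negbK => /and3P[q_nfinal _ /asboolP q_reach].
have succE a : absorb_prob (delta q a) = (absorb_prob_real (delta q a))%:E.
  have succ_reach := reachable_step a q_reach q_nfinal.
  by rewrite /absorb_prob_real asboolT // fineK // absorb_prob_fin_num.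
rewrite /absorb_prob_real asboolT // absorb_prob_step //.
by under eq_bigr do rewrite succE -EFinM; rewrite sumEFin.
Qed.

Lemma transition_matrix_mulE (y : state A -> R) :
  map_mx evalp transition_matrix *m state_col y =
  state_col (fun q => if boundary q then 0 else \sum_a p a * y (delta q a)).
Proof.
apply/matrixP => i z; rewrite ord1 !mxE; case: ifPn => i_bd.
  by rewrite big1 // => k _; rewrite !mxE i_bd /zeval rmorph0 mul0r.
under eq_bigr do rewrite !mxE (negbTE i_bd) /zeval rmorph_sum mulr_suml big_mkcond /=.
rewrite exchange_big /=; apply: eq_bigr => a _.
rewrite (bigD1 (enum_rank (delta (enum_val i) a))) //= enum_rankK eqxx -/(zeval _ _) zevalX.
rewrite big1 ?addr0 // => k k_neq; case: ifPn => // /eqP succ_k.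
by move: k_neq; rewrite succ_k enum_valK eqxx.
Qed.

Lemma system_matrix_mulE (y : state A -> R) :
  map_mx evalp system_matrix *m state_col y =
  state_col y - state_col (fun q => if boundary q then 0 else \sum_a p a * y (delta q a)).
Proof.
have -> : map_mx evalp system_matrix = 1%:M - map_mx evalp transition_matrix.
  by apply/matrixP => i k; rewrite !mxE /zeval rmorphB rmorphMn rmorph1.
by rewrite mulmxBl mul1mx transition_matrix_mulE.
Qed.

Lemma system_matrix_solution : absorb_prob (start A) \is a fin_num ->
  map_mx evalp system_matrix *m state_col absorb_prob_real = map_mx evalp boundary_vector.
Proof.
move=> start_fin; rewrite system_matrix_mulE; apply/matrixP => i k.
rewrite !mxE /zeval rmorph_nat; case: ifPn => [/absorb_prob_real_boundary -> | i_inner].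
  by rewrite subr0.
have i_nfinal : enum_val i \notin final A j.
  by apply: contra i_inner => /final_is_final; rewrite /boundary => ->.
by rewrite -absorb_prob_real_step // subrr /boundary_value (negbTE i_nfinal) andbF.
Qed.

Lemma det_system_matrix_neq0 : \sum_a p a = 1 -> \det (map_mx evalp system_matrix) != 0.
Proof.
move=> p_sum1; apply/negP; rewrite -det_tr => /det0P [v v_neq0 v_ker].
pose y q := v 0 (enum_rank q).
have y_col : state_col y = v^T by apply/matrixP => i k; rewrite ord1 !mxE /y enum_valK.
have y_fix q : y q = if boundary q then 0 else \sum_a p a * y (delta q a).
  have := system_matrix_mulE y; rewrite y_col -[map_mx _ _]trmxK -trmx_mul v_ker trmx0.
  move=> /esym/matrixP/(_ (enum_rank q) 0); rewrite !mxE enum_rankK => /eqP.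
  by rewrite subr_eq0 => /eqP.
have y0 q : y q = 0.
  apply: (harmonic_eq0 (step := @delta _ _ A) p_gt0 p_sum1 boundary_reachable) => r r_bd.
    by rewrite y_fix r_bd.
  by rewrite y_fix (negbTE r_bd).
by move/eqP: v_neq0; apply; apply/rowP => i; rewrite mxE -(y0 (enum_val i)) /y enum_valK.
Qed.

End Probabilities.

End Automaton.

Theorem proposition2p8 (R : realType) (s t : nat) (hs : (1 <= s)%N) (ht : (1 <= t)%N)
    (f : ('I_s.+1 -> R) -> 'I_t.+1 -> R)
    (hf : forall p, in_simplex p -> in_simplex (f p))
    (hA : exists A : automaton s t, aut_simulates A f) :
  forall j : 'I_t.+1, exists g h : mpoly.mpoly s.+1 int,
    forall p, in_simplex p -> zeval h p != 0 /\ f p j = zeval g p / zeval h p.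
Proof.
move=> j; have [A [_ _ simulates]] := hA.
pose M := system_matrix A j; pose i0 := enum_rank (start A).
exists ((\adj M *m boundary_vector A j) i0 0), (\det M) => p [p_bounds p_sum1].
have p_gt0 a : 0 < p a by have /andP[] := p_bounds a.
have start_prob : absorb_prob j p (start A) = (f p j)%:E by exact: simulates.
have start_fin : absorb_prob j p (start A) \is a fin_num by rewrite start_prob.
have start_real : absorb_prob_real j p (start A) = f p j.
  by rewrite /absorb_prob_real asboolT ?start_prob //; exists [::].
have det_neq0 : zeval (\det M) p != 0.
  by rewrite /zeval -det_map_mx det_system_matrix_neq0.
have cramer : zeval ((\adj M *m boundary_vector A j) i0 0) p = zeval (\det M) p * f p j.
  have := cramer_rmorph (phi := mmap intr p) i0 (system_matrix_solution p_gt0 start_fin).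
  by rewrite [state_col _ _ _]mxE enum_rankK start_real; apply.
by split=> //; rewrite cramer mulrAC divff ?mul1r.
Qed.
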